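(* Let $\{G_i\}_{i\ge1}$ be a family of connected finite simple (unweighted) graphs such that $G_i$ has $i$ vertices, and for a partition $\lambda$ let $G_\lambda=G_{\lambda_1}\cup\dots\cup G_{\lambda_{\ell(\lambda)}}$ (disjoint union), so that $\{X_{G_\lambda}\}_\lambda$ is a basis of $\Lambda$. Then for every finite simple graph $G$ with $n$ vertices, \[\sum_{\lambda\vdash n}[X_{G_\lambda}]X_G=1.\]
   Context: $\Lambda$ is the algebra of symmetric functions over $\mathbb{Q}$. $X_G=\sum_\kappa\prod_v x_{\kappa(v)}$ over proper colourings $\kappa:V(G)\to\{1,2,\dots\}$. It is known that for such a family $\{G_i\}$ the functions $X_{G_\lambda}$ form a basis of $\Lambda$. $[X_{G_\lambda}]f$ denotes the coefficient of $X_{G_\lambda}$ in the expansion of $f$ in this basis. *)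

From HB Require Import structures.
From mathcomp Require Import all_boot all_order all_algebra.
From mathcomp Require Import mpoly.

Set Implicit Arguments.
Unset Strict Implicit.
Unset Printing Implicit Defensive.

Import GRing.Theory.
Local Open Scope ring_scope.

(* A graph is an adjacency relation e : rel V on a finite vertex type V
   (simple = symmetric and irreflexive, imposed as hypotheses). *)

Definition proper_col (V : finType) (e : rel V) (N : nat) (k : {ffun V -> 'I_N}) : bool :=
  [forall u, forall v, e u v ==> (k u != k v)].

(* Chromatic symmetric function X_G restricted to the N variables x_0..x_{N-1}:
   sum over proper colourings k : V -> {0..N-1} of prod_v x_{k v}. *)
Definition chrom (V : finType) (e : rel V) (N : nat) : {mpoly rat[N]} :=
  \sum_(k : {ffun V -> 'I_N} | proper_col e k) \prod_(v : V) 'X_(k v).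

(* A partition of n, padded with zeros to length n:
   f 0 >= f 1 >= ... >= f (n-1) >= 0 and sum = n. *)
Definition is_partn (n : nat) (f : {ffun 'I_n -> 'I_n.+1}) : bool :=
  [forall i : 'I_n, forall j : 'I_n, (i <= j)%N ==> (f j <= f i)%N]
  && ((\sum_(i < n) (f i : nat))%N == n).

Definition npartition (n : nat) := {f : {ffun 'I_n -> 'I_n.+1} | is_partn f}.

(* Disjoint union G_lambda = G_{lambda_1} u ... u G_{lambda_l}: vertex set
   {j & 'I_(lambda_j)}, adjacency only within one component. *)
Definition union_vert (n : nat) (f : {ffun 'I_n -> 'I_n.+1}) : finType :=
  {j : 'I_n & 'I_(f j)}.

Definition union_rel (F : forall i : nat, rel 'I_i) (n : nat)
  (f : {ffun 'I_n -> 'I_n.+1}) : rel (union_vert f) :=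
  fun u v => (tag u == tag v) && F (f (tag u)) (tagged u) (tagged_as u v).

Definition XGlam (F : forall i : nat, rel 'I_i) (n : nat) (lam : npartition n) : {mpoly rat[n]} :=
  @chrom (union_vert (val lam)) (@union_rel F n (val lam)) n.

From HB Require Import structures.
From mathcomp Require Import all_boot all_order all_algebra.
From mathcomp Require Import mpoly.
Import Order.TTheory GRing.Theory Num.Theory.
Local Open Scope ring_scope.
Set Implicit Arguments.
Unset Strict Implicit.
Unset Printing Implicit Defensive.

(* Every loopless graph H on n vertices has coefficient n! at the square-free monomial
   x_0 x_1 ... x_(n-1) of X_H (the bijective colourings), so comparing this coefficient
   in X_G = sum_lambda c_lambda X_(G_lambda) gives sum_lambda c_lambda = 1.
   The expansion exists because inclusion-exclusion over edge sets writes X_H as a signed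
   sum of power sums p_mu, mu the component sizes of spanning subgraphs of H. For
   H = G_lambda the subgraphs connecting every component contribute a_lambda p_lambda and
   all others have fewer pairs of connected vertices; a_lambda != 0 since, once the
   components are glued at one vertex, a_lambda is a signed count of connected spanning
   subgraphs, whose sign deletion-contraction determines. Induction on the number of
   connected pairs then expresses every p_mu, hence every X_H, through the X_(G_lambda). *)

Lemma sum_subsetU1 (T : finType) (R : nmodType) (A : {set T}) a (f : {set T} -> R) :
  a \notin A ->
  \sum_(S : {set T} | S \subset a |: A) f S =
  \sum_(S : {set T} | S \subset A) f S + \sum_(S : {set T} | S \subset A) f (a |: S).
Proof.
move=> aA; rewrite (bigID (fun S : {set T} => a \in S)) /= addrC; congr (_ + _).
  apply: eq_bigl => S; apply/andP/idP => [[sS aS]|sA].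
    apply/subsetP => x xS; move/subsetP: sS => /(_ x xS); rewrite !inE.
    by case/orP=> // /eqP xa; rewrite -xa xS in aS.
  split; last by apply: contra aA; apply: (subsetP sA).
  by apply: (subset_trans sA); apply: subsetUr.
rewrite (reindex_onto (fun S => a |: S) (fun S => S :\ a)) /=; last first.
  by move=> S /andP[_ aS]; rewrite setD1K.
apply: eq_bigl => S; rewrite setU11 andbT.
apply/andP/idP => [[sS /eqP eS]|sA].
  apply/subsetP => x xS; have := subsetP sS x; rewrite !inE xS orbT => /(_ isT).
  by case/orP=> // /eqP xa; rewrite -eS xa !inE eqxx in xS.
split; first by rewrite setUS.
apply/eqP/setP => x; rewrite !inE; case: (eqVneq x a) => //= ->.
by apply/esym/negP => /(subsetP sA); rewrite (negbTE aA).
Qed.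

Lemma sum_sign_subset (T : finType) (R : pzRingType) (A : {set T}) :
  \sum_(S : {set T} | S \subset A) (-1) ^+ #|S| = (A == set0)%:R :> R.
Proof.
have [->|/set0Pn[a aA]] := eqVneq A set0.
  by rewrite (big_pred1 set0) ?cards0 // => S; rewrite subset0.
have aA' : a \notin A :\ a by rewrite !inE eqxx.
rewrite -(setD1K aA) sum_subsetU1 // -big_split big1 // => S sS.
by rewrite cardsU1 (contra (subsetP sS a) aA') exprS mulN1r /= addrN.
Qed.

Section Connect.
Variable T : finType.
Implicit Types e : rel T.

Lemma connect_sub_eq e e' :
  subrel e (connect e') -> subrel e' (connect e) -> connect e =2 connect e'.
Proof. by move=> ee' e'e x y; apply/idP/idP; apply: connect_sub. Qed.

Lemma connect_const (U : eqType) e (f : T -> U) :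
  (forall x y, e x y -> f x = f y) -> forall x y, connect e x y -> f x = f y.
Proof.
move=> fe x y /connectP[p]; elim: p x => [|z p IHp] x /= => [_ -> //|/andP[/fe -> ?]].
exact: IHp.
Qed.

Lemma connect_morph (T' : finType) e (e' : rel T') (h : T -> T') :
  (forall x y, e x y -> e' (h x) (h y)) ->
  forall x y, connect e x y -> connect e' (h x) (h y).
Proof.
move=> he x y /connectP[p]; elim: p x => [|z p IHp] x /= => [_ -> //|/andP[/he exz ?] ?].
exact: connect_trans (connect1 exz) (IHp _ _ _).
Qed.

End Connect.

Lemma setU1_ind (T : finType) (P : {set T} -> Prop) :
  P set0 -> (forall a (A : {set T}), a \notin A -> P A -> P (a |: A)) -> forall A, P A.
Proof.
move=> P0 PU A; elim: {A}_.+1 {-2}A (ltnSn #|A|) => // n IHn A.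
have [->|/set0Pn[a aA] leA] := eqVneq A set0 => //.
rewrite -(setD1K aA); apply: PU; first by rewrite !inE eqxx.
by apply: IHn; rewrite (cardsD1 a) aA in leA.
Qed.

Section Contraction.
Variables (V L : finType).
Implicit Types (r : V -> L) (S E : {set V * V}).

(* Vertices with equal labels under [r] are identified, so that [conn_sum r E] is the
   signed count of the spanning subgraphs of E that connect the quotient of V by r. *)
Definition glue r S : rel V := fun x y => (r x == r y) || ((x, y) \in S) || ((y, x) \in S).
Definition glued_connected r S := [forall x, forall y, connect (glue r S) x y].
Definition conn_sum r E : rat :=
  \sum_(S : {set V * V} | S \subset E) (-1) ^+ #|S| * (glued_connected r S)%:R.
Definition nlabels r := #|[set r x | x : V]|.
Definition merge r u v : V -> L := fun x => if r x == r v then r u else r x.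

Lemma glue_label {r S x y} : r x = r y -> connect (glue r S) x y.
Proof. by move=> rxy; apply: connect1; rewrite /glue rxy eqxx. Qed.

Lemma glue_edge {r S x y} : (x, y) \in S -> connect (glue r S) x y.
Proof. by move=> xyS; apply: connect1; rewrite /glue xyS orbT. Qed.

Lemma glue_edgeV {r S x y} : (y, x) \in S -> connect (glue r S) x y.
Proof. by move=> yxS; apply: connect1; rewrite /glue yxS !orbT. Qed.

Lemma connect_glue_sym r S : connect_sym (glue r S).
Proof. by apply: sym_connect_sym => x y; rewrite /glue eq_sym orbAC. Qed.

Lemma glued_connected_eq r r' S : (forall x y, (r x == r y) = (r' x == r' y)) ->
  glued_connected r S = glued_connected r' S.
Proof.
move=> rr'; apply: eq_forallb => x; apply: eq_forallb => y.
by apply: eq_connect => a b; rewrite /glue rr'.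
Qed.

Lemma glueU1_merge r u v S :
  connect (glue r ((u, v) |: S)) =2 connect (glue (merge r u v) S).
Proof.
have muv : merge r u v v = merge r u v u by rewrite /merge eqxx; case: eqP.
have uvS : (u, v) \in (u, v) |: S by rewrite setU11.
apply: connect_sub_eq => a b.
  rewrite {1}/glue !inE.
  case/orP => [/orP[/eqP rab|/orP[/eqP[-> ->]|abS]]|/orP[/eqP[-> ->]|baS]].
  - by apply: glue_label; rewrite /merge rab.
  - exact: glue_label (esym muv).
  - exact: glue_edge.
  - exact: glue_label muv.
  - exact: glue_edgeV.
rewrite {1}/glue => /orP[/orP[/eqP|abS]|baS]; last first.
- by apply: glue_edgeV; rewrite setU1r.
- by apply: glue_edge; rewrite setU1r.
rewrite /merge; case: (r a =P r v) => av; case: (r b =P r v) => bv h.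
- by apply: glue_label; rewrite av bv.
- apply: connect_trans (glue_label av) _.
  exact: connect_trans (glue_edgeV uvS) (glue_label h).
- apply: connect_trans (glue_label h) _.
  exact: connect_trans (glue_edge uvS) (glue_label (esym bv)).
- exact: glue_label.
Qed.

Lemma glued_connectedU1 r u v S :
  glued_connected r ((u, v) |: S) = glued_connected (merge r u v) S.
Proof. by apply: eq_forallb => x; apply: eq_forallb => y; rewrite glueU1_merge. Qed.

Lemma conn_sumU1 r u v E : (u, v) \notin E ->
  conn_sum r ((u, v) |: E) = conn_sum r E - conn_sum (merge r u v) E.
Proof.
move=> uvE; rewrite /conn_sum sum_subsetU1 // -sumrN; congr (_ + _).
apply: eq_bigr => S SE; have uvS : (u, v) \notin S by apply: contra uvE; apply: subsetP.
by rewrite cardsU1 uvS exprS glued_connectedU1 mulN1r mulNr.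
Qed.

Lemma merge_same r u v : r u = r v ->
  forall x y, (merge r u v x == merge r u v y) = (r x == r y).
Proof.
move=> ruv x y; rewrite /merge ruv.
by case: (r x =P r v) => xv; case: (r y =P r v) => yv; rewrite ?xv ?yv ?eqxx.
Qed.

Lemma conn_sum_loop r u v E : (u, v) \in E -> r u = r v -> conn_sum r E = 0.
Proof.
move=> uvE ruv; rewrite -(setD1K uvE) conn_sumU1 ?setD11 //.
under [X in _ - X]eq_bigr do rewrite (glued_connected_eq _ (merge_same ruv)).
exact: subrr.
Qed.

Lemma nlabels_merge r u v : r u != r v -> nlabels (merge r u v) = (nlabels r).-1.
Proof.
move=> ruv; rewrite /nlabels.
have -> : [set merge r u v x | x : V] = [set r x | x : V] :\ r v.
  apply/setP => l; rewrite !inE; apply/imsetP/andP.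
  - case=> x _ ->; rewrite /merge; case: (r x =P r v) => [_|/eqP rxv].
      by split; [|apply/imsetP; exists u].
    by split; [|apply/imsetP; exists x].
  - by case=> lv /imsetP[x _ lx]; exists x => //; rewrite /merge -lx (negbTE lv).
have rv : r v \in [set r x | x : V] by apply/imsetP; exists v.
by rewrite (cardsD1 (r v) [set r x | x : V]) rv.
Qed.

Lemma merge_eq r u v x y : merge r u v x = merge r u v y -> r x != r y ->
  (r x = r v /\ r y = r u) \/ (r y = r v /\ r x = r u).
Proof.
rewrite /merge; case: (r x =P r v) => xv; case: (r y =P r v) => yv.
- by rewrite xv yv eqxx.
- by move=> ->; left.
- by move=> <-; right.
- by move=> ->; rewrite eqxx.
Qed.

(* An edge of S parallel to (u, v) reconnects what the merge of u and v connected. *)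
Lemma glued_connected_unmerge r u v a b S : (a, b) \in S ->
  merge r u v a = merge r u v b -> r a != r b ->
  glued_connected (merge r u v) S -> glued_connected r S.
Proof.
move=> abS mab rab.
have uv : connect (glue r S) u v.
  case: (merge_eq mab rab) => [[av bu]|[bv au]].
  - apply: connect_trans (glue_label (esym bu)) _.
    exact: connect_trans (glue_edgeV abS) (glue_label av).
  - apply: connect_trans (glue_label (esym au)) _.
    exact: connect_trans (glue_edge abS) (glue_label bv).
have vu : connect (glue r S) v u by rewrite connect_glue_sym.
have glue_sub : subrel (glue (merge r u v) S) (connect (glue r S)).
  move=> x y; rewrite {1}/glue => /orP[/orP[/eqP mxy|xyS]|yxS]; last first.
  - exact: glue_edgeV.
  - exact: glue_edge.
  have [/eqP rxy|rxy] := boolP (r x == r y); first exact: glue_label.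
  case: (merge_eq mxy rxy) => [[xv yu]|[yv xu]].
  - apply: connect_trans (glue_label xv) _.
    exact: connect_trans vu (glue_label (esym yu)).
  - apply: connect_trans (glue_label xu) _.
    exact: connect_trans uv (glue_label (esym yv)).
move/forallP=> conn; apply/forallP => x; apply/forallP => y.
exact: connect_sub glue_sub _ _ (forallP (conn x) y).
Qed.

Lemma glue0_label r x y : connect (glue r set0) x y -> r x = r y.
Proof. by apply: connect_const => a b; rewrite /glue !inE !orbF => /eqP. Qed.

Lemma conn_sum0 r : conn_sum r set0 = (glued_connected r set0)%:R.
Proof.
rewrite /conn_sum (big_pred1 set0) ?cards0 ?mul1r // => S.
by rewrite subset0.
Qed.

Variable v0 : V.

(* With this sign, deleting and contracting a non-loop edge writes the value as a sum of
   two values of the same kind, so all values are nonnegative (cf. Whitney's theorem). *)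
Definition signed_conn_sum r E := (-1) ^+ (nlabels r).-1 * conn_sum r E.

Lemma nlabels_gt0 r : (0 < nlabels r)%N.
Proof. by rewrite card_gt0; apply/set0Pn; exists (r v0); apply/imsetP; exists v0. Qed.

Lemma glued_connected0_nlabels r : glued_connected r set0 -> nlabels r = 1%N.
Proof.
move=> conn; apply/eqP; rewrite eqn_leq nlabels_gt0 andbT -(cards1 (r v0)).
apply: subset_leq_card; apply/subsetP => _ /imsetP[x _ ->]; rewrite inE.
by apply/eqP/glue0_label; move/forallP: conn => /(_ x)/forallP/(_ v0).
Qed.

Lemma signed_conn_sum0 r : signed_conn_sum r set0 = (glued_connected r set0)%:R.
Proof.
rewrite /signed_conn_sum conn_sum0; have [conn|_] := boolP (glued_connected r set0).
  by rewrite glued_connected0_nlabels // expr0 mul1r.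
by rewrite mulr0.
Qed.

Lemma signed_conn_sumU1 r u v E : (u, v) \notin E -> r u != r v ->
  signed_conn_sum r ((u, v) |: E) =
  signed_conn_sum r E + signed_conn_sum (merge r u v) E.
Proof.
move=> uvE ruv; rewrite /signed_conn_sum conn_sumU1 // nlabels_merge // mulrBr.
have : (1 < nlabels r)%N.
  by apply/card_gt1P; exists (r u), (r v); split => //; apply/imsetP; [exists u|exists v].
by case: (nlabels r) => [|[|k]] // _ /=; rewrite exprS !mulN1r !mulNr opprK.
Qed.

Lemma signed_conn_sum_ge0 E r : 0 <= signed_conn_sum r E.
Proof.
elim/setU1_ind: E r => [r|[u v] E uvE IHE r]; first by rewrite signed_conn_sum0 ler0n.
have [ruv|ruv] := eqVneq (r u) (r v).
  by rewrite /signed_conn_sum (conn_sum_loop (setU11 _ _) ruv) mulr0.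
by rewrite signed_conn_sumU1 // addr_ge0.
Qed.

Lemma signed_conn_sum_gt0 E r : glued_connected r E ->
  (forall u v, (u, v) \in E -> r u != r v) -> 0 < signed_conn_sum r E.
Proof.
elim/setU1_ind: E r => [r conn _|[u v] E uvE IHE r conn loopless].
  by rewrite signed_conn_sum0 conn ltr01.
have ruv := loopless u v (setU11 _ _).
have looplessE a b : (a, b) \in E -> r a != r b.
  by move=> abE; apply: loopless; rewrite setU1r.
rewrite glued_connectedU1 in conn; rewrite signed_conn_sumU1 //.
have [/existsP[[a b] /andP[abE /eqP mab]]|/existsPn merge_loopless] :=
  boolP [exists f, (f \in E) && (merge r u v f.1 == merge r u v f.2)].
  rewrite /signed_conn_sum (conn_sum_loop abE mab) mulr0 addr0.
  exact: IHE (glued_connected_unmerge abE mab (looplessE _ _ abE) conn) looplessE.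
rewrite ltr_wpDl ?signed_conn_sum_ge0 // IHE // => a b abE.
by have := merge_loopless (a, b); rewrite abE.
Qed.

Lemma conn_sum_neq0 r E : glued_connected r E ->
  (forall u v, (u, v) \in E -> r u != r v) -> conn_sum r E != 0.
Proof.
move=> conn loopless; have := signed_conn_sum_gt0 conn loopless.
by rewrite /signed_conn_sum; apply: contraTneq => ->; rewrite mulr0 ltxx.
Qed.

End Contraction.

Definition sym_closure (V : finType) (s : rel V) : rel V := fun x y => s x y || s y x.
Definition rel_of (V : finType) (S : {set V * V}) : rel V := fun x y => (x, y) \in S.
Definition edge_set (V : finType) (e : rel V) : {set V * V} := [set p | e p.1 p.2].
Definition conn_pairs (V : finType) (s : rel V) : nat :=
  #|[set p : V * V | connect (sym_closure s) p.1 p.2]|.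

Lemma connect_sym_closure (V : finType) (s : rel V) : connect_sym (sym_closure s).
Proof. by apply: sym_connect_sym => x y; rewrite /sym_closure orbC. Qed.

Section Colourings.
Variable n : nat.

Definition monochrom (V : finType) (s : rel V) : {mpoly rat[n]} :=
  \sum_(k : {ffun V -> 'I_n} | [forall x, forall y, s x y ==> (k x == k y)])
     \prod_(v : V) 'X_(k v).

Definition power_sum (m : nat) : {mpoly rat[n]} := \sum_(i < n) 'X_i ^+ m.

Lemma monochrom_connect (V : finType) (s : rel V) (k : V -> 'I_n) :
  [forall x, forall y, s x y ==> (k x == k y)] =
  [forall x, forall y, connect (sym_closure s) x y ==> (k x == k y)].
Proof.
apply/forallP/forallP => ks x; apply/forallP => y; apply/implyP; last first.
  by move=> sxy; apply: (implyP (forallP (ks x) y)); apply/connect1/orP; left.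
move=> /connect_const -> //= a b /orP[] sab; apply/eqP.
  exact: (implyP (forallP (ks a) b)).
by rewrite eq_sym; apply: (implyP (forallP (ks b) a)).
Qed.

Lemma eq_monochrom (V : finType) (s s' : rel V) :
  connect (sym_closure s) =2 connect (sym_closure s') -> monochrom s = monochrom s'.
Proof.
move=> ss'; apply: eq_bigl => k; rewrite (monochrom_connect s) (monochrom_connect s').
by apply: eq_forallb => x; apply: eq_forallb => y; rewrite ss'.
Qed.

Lemma chrom_inclusion_exclusion (V : finType) (e : rel V) :
  chrom e n =
  \sum_(S : {set V * V} | S \subset edge_set e) (-1) ^+ #|S| *: monochrom (rel_of S).
Proof.
under eq_bigr do rewrite scaler_sumr.
rewrite (exchange_big_dep xpredT) //= /chrom big_mkcond /=; apply: eq_bigr => k _.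
pose M := [set p : V * V | k p.1 == k p.2].
have monoE S : [forall x, forall y, rel_of S x y ==> (k x == k y)] = (S \subset M).
  apply/forallP/subsetP => [kS [x y] xyS|kS x].
    by rewrite inE; apply: (implyP (forallP (kS x) y)).
  by apply/forallP => y; apply/implyP => /kS; rewrite inE.
rewrite -scaler_suml (eq_bigl (fun S : {set V * V} => S \subset edge_set e :&: M)) => [|S];
  last by rewrite subsetI monoE.
rewrite sum_sign_subset; have <- : proper_col e k = (edge_set e :&: M == set0).
  apply/forallP/eqP => [proper|no_mono u].
    apply/setP => -[x y]; rewrite !inE /=; have := implyP (forallP (proper x) y).
    by case: (e x y) => // /(_ isT)/negbTE ->.
  apply/forallP => v; apply/implyP => euv; apply/eqP => kuv.
  by move/setP: no_mono => /(_ (u, v)); rewrite !inE /= euv kuv eqxx.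
by case: proper_col; rewrite ?scale1r ?scale0r.
Qed.

Section Fibres.
Hypothesis n_gt0 : (0 < n)%N.
Variables (V I : finType) (b : V -> I).
Let im := [set b v | v : V].

Lemma monochrom_fibres :
  monochrom (fun x y => b x == b y) = \prod_(i in im) power_sum #|[set v | b v == i]|.
Proof.
pose j0 := Ordinal n_gt0; rewrite /monochrom /power_sum (big_distr_big_dep j0) /=.
set pf := pfamily j0 _ _.
pose lift (g : {ffun I -> 'I_n}) : {ffun V -> 'I_n} := [ffun v => g (b v)].
have off_im g i : g \in pf -> i \notin im -> g i = j0.
  case/pfamilyP => supp _ iim; apply/eqP/negPn/negP => gi.
  by move: (subsetP supp i); rewrite !inE gi (negbTE iim) => /(_ isT).
have lift_inj : {in pf &, injective lift}.
  move=> g1 g2 g1pf g2pf g12; apply/ffunP => i.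
  have [/imsetP[v _ ->]|iim] := boolP (i \in im); last by rewrite !off_im.
  by move/ffunP: g12 => /(_ v); rewrite !ffunE.
rewrite (eq_bigl (fun k : {ffun V -> 'I_n} => k \in [set lift g | g in pf])); last first.
  move=> k; apply/forallP/imsetP => [kb|[g _ ->] x]; last first.
    by apply/forallP => y; apply/implyP => /eqP bxy; rewrite !ffunE bxy.
  pose g := [ffun i => if [pick v | b v == i] is Some v then k v else j0].
  exists g.
    apply/pfamilyP; split => //; apply/subsetP => i; rewrite !inE ffunE.
    by case: pickP => [v /eqP <- _|_]; [apply/imsetP; exists v|rewrite eqxx].
  apply/ffunP => v; rewrite !ffunE; case: pickP => [w bw|/(_ v)]; last by rewrite eqxx.
  by apply/esym/eqP; apply: (implyP (forallP (kb w) v)).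
rewrite big_imset //=; apply: eq_bigr => g _.
rewrite (partition_big b (mem im)) => [|v _]; last exact: imset_f.
apply: eq_bigr => i _; rewrite -prodr_const.
rewrite (eq_bigl (fun v => v \in [set v | b v == i])) => [|v]; last by rewrite inE.
by apply: eq_bigr => v; rewrite inE => /eqP <-; rewrite ffunE.
Qed.

End Fibres.
End Colourings.

Section Partitions.
Variable n : nat.
Implicit Type lam : npartition n.

Definition psum_part lam : {mpoly rat[n]} :=
  \prod_(j < n | (val lam j : nat) != 0%N) power_sum n (val lam j).
Definition sumsq_part lam : nat := \sum_(j < n) (val lam j : nat) ^ 2.

Lemma size_le_sumn (s : seq nat) : all (fun x => 0 < x)%N s -> (size s <= sumn s)%N.
Proof.
move=> s_pos; rewrite -sum1_size sumnE big_seq [X in (_ <= X)%N]big_seq.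
by apply: leq_sum => x /(allP s_pos).
Qed.

Section NthBig.
Variables (R : Type) (idx : R) (op : Monoid.com_law idx) (s : seq nat).
Hypotheses (s_pos : all (fun x => 0 < x)%N s) (size_s : (size s <= n)%N).

Lemma big_ord_nth (G : nat -> R) :
  \big[op/idx]_(j < n | nth 0 s j != 0%N) G (nth 0 s j) = \big[op/idx]_(x <- s) G x.
Proof.
rewrite (eq_bigl (fun j : 'I_n => (j < size s)%N)) => [|j].
  rewrite [RHS](big_nth 0%N) big_mkord.
  by rewrite (big_ord_widen_cond n xpredT (G \o nth 0 s) size_s).
have [lt_j|ge_j] := ltnP j (size s); last by rewrite nth_default ?eqxx.
by rewrite -lt0n; apply: (allP s_pos); rewrite mem_nth.
Qed.

Lemma big_ord_nth0 (G : nat -> R) : G 0%N = idx ->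
  \big[op/idx]_(j < n) G (nth 0 s j) = \big[op/idx]_(x <- s) G x.
Proof.
move=> G0; rewrite -big_ord_nth [RHS]big_mkcond; apply: eq_bigr => j _.
by case: eqP => // ->.
Qed.

End NthBig.

Lemma npartition_nth (s : seq nat) : sorted geq s -> all (fun x => 0 < x)%N s ->
  sumn s = n -> exists lam, forall j : 'I_n, val lam j = nth 0 s j :> nat.
Proof.
move=> s_sorted s_pos s_sum.
have size_s : (size s <= n)%N by rewrite -s_sum size_le_sumn.
have nth_le j : (nth 0 s j <= n)%N.
  have [lt_j|ge_j] := ltnP j (size s); last by rewrite nth_default.
  by rewrite -s_sum sumnE (big_rem _ (mem_nth 0 lt_j)) leq_addr.
pose f : {ffun 'I_n -> 'I_n.+1} := [ffun j : 'I_n => inord (nth 0 s j)].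
have fE (j : 'I_n) : f j = nth 0 s j :> nat by rewrite ffunE inordK // ltnS.
suff f_part : is_partn f by exists (exist _ f f_part).
apply/andP; split.
  apply/forallP => i; apply/forallP => j; apply/implyP => le_ij; rewrite !fE.
  have [lt_j|ge_j] := ltnP j (size s); last by rewrite nth_default.
  have geq_trans : transitive geq by move=> ? ? ? /= ? /leq_trans; apply.
  apply: (sorted_leq_nth geq_trans leqnn) => //; rewrite inE //.
  exact: leq_ltn_trans le_ij lt_j.
apply/eqP; under eq_bigr do rewrite fE.
by rewrite (big_ord_nth0 addn s_pos size_s (G := id)) // -sumnE.
Qed.

Lemma npartition_of_seq (sz : seq nat) : all (fun x => 0 < x)%N sz -> sumn sz = n ->
  exists lam, psum_part lam = \prod_(x <- sz) power_sum n x /\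
              sumsq_part lam = (\sum_(x <- sz) x ^ 2)%N.
Proof.
move=> sz_pos sz_sum; set s := sort geq sz.
have s_perm : perm_eq s sz by rewrite perm_sort.
have s_pos : all (fun x => 0 < x)%N s by rewrite (perm_all _ s_perm).
have s_sum : sumn s = n by rewrite (perm_sumn s_perm).
have size_s : (size s <= n)%N by rewrite -s_sum size_le_sumn.
have s_sorted : sorted geq s by apply: sort_sorted => x y; apply: leq_total.
have [lam lamE] := npartition_nth s_sorted s_pos s_sum.
exists lam; rewrite -!(perm_big _ s_perm); split.
  rewrite -(big_ord_nth _ s_pos size_s) /psum_part.
  by apply: eq_big => [j|j _]; rewrite lamE.
rewrite -(big_ord_nth0 _ s_pos size_s) // /sumsq_part.
by apply: eq_bigr => j _; rewrite lamE.
Qed.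

Lemma sum_card_fibres (V I : finType) (b : V -> I) :
  (\sum_(i in [set b v | v : V]) #|[set v | b v == i]|)%N = #|V|.
Proof.
rewrite -sum1_card (partition_big b (mem [set b v | v : V])) => [|v _]; last exact: imset_f.
by apply: eq_bigr => i _; rewrite sum1_card; apply: eq_card => v; rewrite !inE.
Qed.

Lemma card_fibre_pairs (V I : finType) (b : V -> I) :
  #|[set p : V * V | b p.1 == b p.2]| =
  (\sum_(i in [set b v | v : V]) #|[set v | b v == i]| ^ 2)%N.
Proof.
rewrite -sum1_card (partition_big (b \o fst) (mem [set b v | v : V])) => [|p _]; last first.
  exact: imset_f.
apply: eq_bigr => i _; rewrite sum1_card expnS expn1 -cardsX; apply: eq_card => -[x y].
rewrite unfold_in /= !inE /=.
by case: (b x =P i) => [->|]; rewrite ?andbF // andbT eq_sym.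
Qed.

Hypothesis n_gt0 : (0 < n)%N.

Lemma npartition_fibres (V I : finType) (b : V -> I) : #|V| = n ->
  exists lam, psum_part lam = monochrom n (fun x y => b x == b y) /\
              sumsq_part lam = #|[set p : V * V | b p.1 == b p.2]|.
Proof.
move=> cardV; set im := [set b v | v : V].
set sz := [seq #|[set v | b v == i]| | i <- enum im].
have sz_pos : all (fun x => 0 < x)%N sz.
  apply/allP => _ /mapP[_ /[!mem_enum] /imsetP[v _ ->] ->].
  by apply/card_gt0P; exists v; rewrite inE.
have sz_sum : sumn sz = n by rewrite -cardV -(sum_card_fibres b) sumnE big_map big_enum.
have [lam [lamE lam_sq]] := npartition_of_seq sz_pos sz_sum.
exists lam; rewrite lamE lam_sq card_fibre_pairs (monochrom_fibres n_gt0).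
by rewrite !big_map !big_enum.
Qed.

Lemma monochrom_eq_fibres (V I : finType) (s : rel V) (b : V -> I) :
  (forall x y, connect (sym_closure s) x y = (b x == b y)) ->
  monochrom n s = monochrom n (fun x y => b x == b y).
Proof.
move=> sb; apply: eq_monochrom => x y; rewrite sb; apply/eqP/idP => [bxy|].
  by apply: connect1; rewrite /sym_closure bxy eqxx.
by apply: connect_const => a c /orP[] /eqP.
Qed.

Lemma npartition_components (V : finType) (s : rel V) : #|V| = n ->
  exists lam, psum_part lam = monochrom n s /\ sumsq_part lam = conn_pairs s.
Proof.
move=> cardV; pose b x := [set y | connect (sym_closure s) x y].
have sym := @connect_sym_closure V s.
have bE x y : connect (sym_closure s) x y = (b x == b y).
  apply/idP/eqP => [sxy|bxy]; last first.
    have : y \in b y by rewrite inE connect0.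
    by rewrite -bxy inE.
  by apply/setP => z; rewrite !inE; apply/idP/idP; apply: connect_trans; rewrite // sym.
have [lam [lamE lam_sq]] := npartition_fibres b cardV.
exists lam; rewrite (monochrom_eq_fibres bE) lamE lam_sq; split => //.
by apply: eq_card => p; rewrite !inE bE.
Qed.

End Partitions.

Section UnionGraph.
Unset Implicit Arguments.
Variable F : forall i : nat, rel 'I_i.
Set Implicit Arguments.
Variables (n : nat) (lam : npartition n).
Local Notation U := (union_vert (val lam)).
Local Notation EU := (edge_set (@union_rel F n (val lam))).
Implicit Types (x y : U) (T : {set U * U}).

Lemma card_union_vert : #|U| = n.
Proof.
case/andP: (valP lam) => _ /eqP sum_lam; rewrite card_tagged -[X in _ = X]sum_lam.
by rewrite sumnE big_map big_enum; apply: eq_bigr => j _; rewrite card_ord.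
Qed.

Lemma union_rel_irr :
  (forall i : nat, irreflexive (F i)) -> irreflexive (@union_rel F n (val lam)).
Proof. by move=> Firr [j a]; rewrite /union_rel /= tagged_asE Firr andbF. Qed.

Lemma union_rel_tag x y : @union_rel F n (val lam) x y -> tag x = tag y.
Proof. by case/andP => /eqP. Qed.

Lemma connect_tag T x y : T \subset EU ->
  connect (sym_closure (rel_of T)) x y -> tag x = tag y.
Proof.
move=> TE; apply: connect_const => a b /orP[] /(subsetP TE).
  by rewrite inE => /union_rel_tag.
by rewrite inE => /union_rel_tag.
Qed.

Lemma card_tag j : #|[set u : U | tag u == j]| = val lam j.
Proof.
have Tagged_inj := @eq_from_Tagged _ (fun j => 'I_(val lam j)) j.
rewrite -[RHS](card_ord (val lam j)) -(card_imset _ Tagged_inj).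
apply: eq_card => u; rewrite !inE; apply/eqP/imsetP => [tu|[a _ ->] //].
by case: u tu => j' a /= tu; subst j'; exists a.
Qed.

Lemma tag_image j : (j \in [set tag u | u : U]) = ((val lam j : nat) != 0%N).
Proof.
apply/imsetP/idP => [[u _ ->]|lam_j].
  by rewrite -lt0n (leq_ltn_trans _ (ltn_ord (tagged u))).
by rewrite -lt0n in lam_j; exists (Tagged (fun j => 'I_(val lam j)) (Ordinal lam_j)).
Qed.

Lemma card_tag_pairs : #|[set p : U * U | tag p.1 == tag p.2]| = sumsq_part lam.
Proof.
rewrite card_fibre_pairs /sumsq_part [RHS](bigID (fun j => (val lam j : nat) != 0%N)) /=.
rewrite [X in (_ + X)%N]big1 ?addn0 => [|j /negPn/eqP -> //].
by apply: eq_big => [j|j _]; rewrite ?tag_image ?card_tag.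
Qed.

Lemma monochrom_tag : (0 < n)%N ->
  monochrom n (fun x y : U => tag x == tag y) = psum_part lam.
Proof.
move=> n_gt0; rewrite monochrom_fibres //.
by apply: eq_big => [j|j _]; rewrite ?tag_image ?card_tag.
Qed.

Definition joins_components T : bool :=
  [forall x, forall y, (tag x == tag y) ==> connect (sym_closure (rel_of T)) x y].

Lemma monochrom_joins T : (0 < n)%N -> T \subset EU -> joins_components T ->
  monochrom n (rel_of T) = psum_part lam.
Proof.
move=> n_gt0 TE /forallP joins.
rewrite -monochrom_tag // (@monochrom_eq_fibres n _ _ _ tag) //.
move=> x y; apply/idP/eqP => [/(connect_tag TE)//|/eqP txy].
exact: (implyP (forallP (joins x) y)).
Qed.

Lemma conn_pairs_lt T : T \subset EU -> ~~ joins_components T ->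
  (conn_pairs (rel_of T) < sumsq_part lam)%N.
Proof.
move=> TE; rewrite -card_tag_pairs => /forallPn[x /forallPn[y]].
rewrite negb_imply => /andP[txy not_conn]; apply: proper_card; apply/properP; split.
  by apply/subsetP => -[a b]; rewrite !inE /= => /(connect_tag TE) ->.
by exists (x, y); rewrite !inE.
Qed.

Definition root x : U :=
  Tagged (fun j => 'I_(val lam j)) (Ordinal (leq_ltn_trans (leq0n _) (ltn_ord (tagged x)))).

Lemma root_tag x y : tag x = tag y -> root x = root y.
Proof.
case: x y => j a [j' b] /= jj'; subst j'.
by rewrite /root /=; congr existT; apply: val_inj.
Qed.

(* Giving all roots the same label glues the components of G_lambda at a single vertex:
   T then connects every component iff it connects the glued graph. *)
Definition root_label x : option U := if x == root x then None else Some x.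

Lemma root_label_eq x y : root_label x = root_label y -> x = y \/ y = root y.
Proof.
rewrite /root_label; have [|_] := eqVneq y (root y); first by right.
by case: eqP => // _ [->]; left.
Qed.

Lemma root_root x : root (root x) = root x.
Proof. exact: root_tag. Qed.

Lemma joins_glued T : T \subset EU -> joins_components T = glued_connected root_label T.
Proof.
move=> TE; set c := sym_closure (rel_of T).
have c_sym : connect_sym c by apply: connect_sym_closure.
have c_glue : subrel c (connect (glue root_label T)).
  by move=> x y /orP[]; [apply: glue_edge|apply: glue_edgeV].
apply/forallP/forallP => [joins x|glued x].
  have to_root z : connect c z (root z) by apply: (implyP (forallP (joins z) (root z))).
  apply/forallP => y; apply: connect_trans (connect_sub c_glue (to_root x)) _.
  have root_y : connect c (root y) y by rewrite c_sym to_root.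
  apply: connect_trans (glue_label _) (connect_sub c_glue root_y).
  by rewrite /root_label !root_root !eqxx.
have reach_closed : closed (glue root_label T) [pred z | connect c z (root z)].
  apply: (intro_closed (connect_glue_sym _ _)) => a b.
  rewrite /glue !inE /= => /orP[/orP[/eqP/root_label_eq[<- //|->]|abT]|baT] a_root.
  - by rewrite root_root connect0.
  - have ab : connect c a b by apply: connect1; rewrite /c /sym_closure /rel_of abT.
    rewrite -(root_tag (connect_tag TE ab)).
    by apply: connect_trans _ a_root; rewrite c_sym.
  - have ba : connect c b a by apply: connect1; rewrite /c /sym_closure /rel_of baT.
    by rewrite (root_tag (connect_tag TE ba)) (connect_trans ba a_root).
have to_root z : connect c z (root z).
  have := closed_connect reach_closed (forallP (glued (root z)) z).
  by rewrite !inE /= root_root connect0 => <-.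
apply/forallP => y; apply/implyP => /eqP/root_tag rxy.
by apply: connect_trans (to_root x) _; rewrite rxy c_sym to_root.
Qed.

Lemma EU_joins : (forall (i : nat) (a b : 'I_i), connect (F i) a b) -> joins_components EU.
Proof.
move=> Fconn; apply/forallP => -[j a]; apply/forallP => -[j' b].
apply/implyP => /eqP /= jj'; subst j'; have := Fconn _ a b.
apply: (connect_morph (h := Tagged (fun j => 'I_(val lam j)))) => a' b' ab'.
by rewrite /sym_closure /rel_of inE /union_rel /= eqxx tagged_asE ab'.
Qed.

Lemma EU_loopless : (forall i : nat, irreflexive (F i)) ->
  forall x y, (x, y) \in EU -> root_label x != root_label y.
Proof.
move=> Firr x y; rewrite inE /= => xy; have txy := union_rel_tag xy.
have x_ne_y : x != y by apply: contraTneq xy => ->; rewrite union_rel_irr.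
apply/eqP => /[dup] /root_label_eq[/eqP|yr]; first by rewrite (negbTE x_ne_y).
case/esym/root_label_eq => [/eqP|xr]; first by rewrite eq_sym (negbTE x_ne_y).
by move: x_ne_y; rewrite xr yr (root_tag txy) eqxx.
Qed.

Lemma conn_sum_EU : conn_sum root_label EU =
  \sum_(T : {set U * U} | (T \subset EU) && joins_components T) (-1) ^+ #|T|.
Proof.
rewrite /conn_sum big_mkcondr /=; apply: eq_bigr => T TE.
by rewrite -joins_glued //; case: joins_components; rewrite ?mulr1 ?mulr0.
Qed.

Lemma conn_sum_EU_neq0 : (0 < n)%N -> (forall i : nat, irreflexive (F i)) ->
  (forall (i : nat) (a b : 'I_i), connect (F i) a b) -> conn_sum root_label EU != 0.
Proof.
move=> n_gt0 Firr Fconn; have /card_gt0P[v0 _] : (0 < #|U|)%N by rewrite card_union_vert.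
by apply: (conn_sum_neq0 v0 _ (EU_loopless Firr)); rewrite -joins_glued // EU_joins.
Qed.

Lemma XGlam_decomposition : (0 < n)%N ->
  XGlam F lam = conn_sum root_label EU *: psum_part lam +
    \sum_(T : {set U * U} | (T \subset EU) && ~~ joins_components T)
       (-1) ^+ #|T| *: monochrom n (rel_of T).
Proof.
move=> n_gt0; rewrite /XGlam chrom_inclusion_exclusion (bigID joins_components) /=.
rewrite conn_sum_EU scaler_suml; congr (_ + _); apply: eq_bigr => T /andP[TE joins].
by rewrite monochrom_joins.
Qed.

End UnionGraph.

Lemma chrom_card0 (V : finType) (e : rel V) N : #|V| = 0%N -> chrom e N = 1.
Proof.
move=> /card0_eq V0.
have k0 : {ffun V -> 'I_N} by apply: finfun => v; move: (V0 v); rewrite inE.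
rewrite /chrom (big_pred1 k0) => [|k]; first by rewrite big_pred0.
have -> : k = k0 by apply/ffunP => v; move: (V0 v); rewrite inE.
by rewrite /= eqxx; apply/forallP => v; move: (V0 v); rewrite inE.
Qed.

Section Span.
Unset Implicit Arguments.
Variable F : forall i : nat, rel 'I_i.
Set Implicit Arguments.
Hypothesis Firr : forall i : nat, irreflexive (F i).
Hypothesis Fconn : forall (i : nat) (a b : 'I_i), connect (F i) a b.
Variable n : nat.

Definition in_XG_span (p : {mpoly rat[n]}) :=
  exists c : npartition n -> rat, p = \sum_lam c lam *: XGlam F lam.

Lemma in_XG_span_XG lam : in_XG_span (XGlam F lam).
Proof.
exists (fun l => (l == lam)%:R); rewrite (bigD1 lam) //= eqxx scale1r big1 ?addr0 //.
by move=> l /negbTE->; rewrite scale0r.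
Qed.

Lemma in_XG_spanZ a p : in_XG_span p -> in_XG_span (a *: p).
Proof.
case=> c ->; exists (fun l => a * c l).
by rewrite scaler_sumr; apply: eq_bigr => l _; rewrite scalerA.
Qed.

Lemma in_XG_spanD p q : in_XG_span p -> in_XG_span q -> in_XG_span (p + q).
Proof.
case=> c1 -> [c2 ->]; exists (fun l => c1 l + c2 l).
by rewrite -big_split; apply: eq_bigr => l _; rewrite scalerDl.
Qed.

Lemma in_XG_span_sum (I : finType) (P : pred I) (G : I -> {mpoly rat[n]}) :
  (forall i, P i -> in_XG_span (G i)) -> in_XG_span (\sum_(i | P i) G i).
Proof.
apply: big_ind; [|exact: in_XG_spanD].
by exists (fun=> 0); rewrite big1 // => l _; rewrite scale0r.
Qed.

Lemma monochrom_in_XG_span (V : finType) (s : rel V) : (0 < n)%N -> #|V| = n ->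
  in_XG_span (monochrom n s).
Proof.
move=> n_gt0; have [m] := ubnP (conn_pairs s); elim: m V s => // m IHm V s lt_s cardV.
have [lam [<- lam_sq]] := npartition_components n_gt0 s cardV.
move: (XGlam_decomposition F lam n_gt0) (conn_sum_EU_neq0 lam n_gt0 Firr Fconn).
set c := conn_sum _ _; set rest := \sum_(T | _) _ => XGE c_neq0.
have -> : psum_part lam = c^-1 *: (XGlam F lam - rest).
  by rewrite XGE addrK scalerA mulVf ?scale1r.
apply/in_XG_spanZ/in_XG_spanD; first exact: in_XG_span_XG.
rewrite -scaleN1r; apply/in_XG_spanZ/in_XG_span_sum => T /andP[TE not_joins].
apply/in_XG_spanZ/IHm; last exact: card_union_vert.
by apply: leq_trans (conn_pairs_lt TE not_joins) _; rewrite lam_sq -ltnS.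
Qed.

Lemma chrom_in_XG_span (V : finType) (e : rel V) : #|V| = n -> in_XG_span (chrom e n).
Proof.
move=> cardV; have [n0|n_gt0] := posnP n.
  have [lam _] := @npartition_nth n [::] isT isT (esym n0).
  have -> : chrom e n = XGlam F lam by rewrite /XGlam !chrom_card0 ?cardV ?card_union_vert.
  exact: in_XG_span_XG.
rewrite chrom_inclusion_exclusion; apply: in_XG_span_sum => S _.
exact/in_XG_spanZ/monochrom_in_XG_span.
Qed.

End Span.

Section AllOnesCoefficient.
Variable n : nat.

Definition mnm_all1 : 'X_{1..n} := (\sum_(i < n) mnm1 i)%MM.

Lemma mnm_all1E j : mnm_all1 j = 1%N.
Proof.
rewrite mnm_sumE (bigD1 j) //= mnm1E eqxx big1 // => i /negbTE ij.
by rewrite mnm1E ij.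
Qed.

Lemma prod_X_colouring (V : finType) (k : V -> 'I_n) :
  \prod_(v : V) ('X_(k v) : {mpoly rat[n]}) = 'X_[\sum_(v : V) mnm1 (k v)].
Proof.
by rewrite -(big_map (fun v => mnm1 (k v)) xpredT (fun m => 'X_[m])) mpolyX_prod big_map.
Qed.

Lemma mnm_colouring_all1 (V : finType) (k : {ffun V -> 'I_n}) : #|V| = n ->
  ((\sum_(v : V) mnm1 (k v))%MM == mnm_all1) = injectiveb k.
Proof.
move=> cardV.
have fibreE j : (\sum_(v : V) mnm1 (k v))%MM j = #|[set v | k v == j]|.
  rewrite mnm_sumE -sum1_card [RHS](eq_bigl (fun v => k v == j)) => [|v].
    by rewrite [RHS]big_mkcond; apply: eq_bigr => v _; rewrite mnm1E; case: eqP.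
  by rewrite inE.
apply/eqP/injectiveP => [k_all1 x y kxy|k_inj].
  move: (mnm_all1E (k x)); rewrite -k_all1 fibreE => /eqP/cards1P[z xyz].
  have : x \in [set z] by rewrite -xyz inE.
  have : y \in [set z] by rewrite -xyz inE kxy.
  by rewrite !inE => /eqP -> /eqP ->.
apply/mnmP => j; rewrite fibreE mnm_all1E.
have k_onto : [set k v | v : V] = [set: 'I_n].
  by apply/eqP; rewrite eqEcard subsetT cardsT card_ord (card_imset _ k_inj) cardV leqnn.
have /imsetP[x _ ->] : j \in [set k v | v : V] by rewrite k_onto inE.
by apply/eqP/cards1P; exists x; apply/setP => y; rewrite !inE (inj_eq k_inj).
Qed.

Lemma mcoeff_chrom_all1 (V : finType) (e : rel V) : irreflexive e -> #|V| = n ->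
  (chrom e n)@_mnm_all1 = (n`!)%:R.
Proof.
move=> e_irr cardV; rewrite raddf_sum /=.
under eq_bigr do rewrite prod_X_colouring mcoeffX mnm_colouring_all1 //.
rewrite (bigID (fun k : {ffun V -> 'I_n} => injectiveb k)) /=.
rewrite [X in _ + X]big1 ?addr0 => [|k /andP[_ /negbTE ->] //].
rewrite (eq_big (fun k : {ffun V -> 'I_n} => injectiveb k) (fun=> 1))
  => [|k|k /andP[_ ->] //].
  rewrite sumr_const (eq_card (B := [set k : {ffun V -> 'I_n} | injectiveb k])) => [|k].
    by rewrite card_inj_ffuns card_ord cardV -(ffact_fact (leqnn n)) subnn fact0 muln1.
  by rewrite inE.
apply/andP/idP => [[]//|k_inj]; split => //; apply/forallP => u; apply/forallP => v.
by apply/implyP; apply: contraTneq => /(injectiveP _ k_inj) ->; rewrite e_irr.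
Qed.

End AllOnesCoefficient.

Theorem theorem3p5
  (F : forall i : nat, rel 'I_i)
  (Fsym : forall i : nat, ssrbool.symmetric (F i))
  (Firr : forall i : nat, irreflexive (F i))
  (Fconn : forall (i : nat) (x y : 'I_i), connect (F i) x y)
  (n : nat) (e : rel 'I_n)
  (esym : ssrbool.symmetric e) (eirr : irreflexive e) :
  (exists c : npartition n -> rat,
      chrom e n = \sum_(lam : npartition n) c lam *: XGlam F lam)
  /\
  (forall c : npartition n -> rat,
      chrom e n = \sum_(lam : npartition n) c lam *: XGlam F lam ->
      \sum_(lam : npartition n) c lam = 1).
Proof.
split; first by case: (chrom_in_XG_span Firr Fconn e (card_ord n)) => c ->; exists c.
move=> c /(congr1 (mcoeff (mnm_all1 n))).
rewrite mcoeff_chrom_all1 ?card_ord // raddf_sum /=.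
under eq_bigr => lam _.
  by rewrite mcoeffZ (mcoeff_chrom_all1 (union_rel_irr Firr) (card_union_vert lam)) over.
have fact_neq0 : (n`!)%:R != 0 :> rat by rewrite pnatr_eq0 -lt0n fact_gt0.
by rewrite -mulr_suml -[X in X = _]mul1r => /(mulIf fact_neq0).
Qed.
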